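(* Assume the setting in the context. Let $x_i,x_j,x_k\in X$ be distinct, and suppose $(x_i,x_j)$ is an invisible pair, i.e., for all $M\subseteq X\setminus\{x_i\}$, $N\subseteq X\setminus\{x_j\}$ and $G_1,G_2\in\mathcal G$, $x_i-G_1(M)\not\perp\!\!\!\perp x_j-G_2(N)$. If $x_k$ is an ancestor of $x_i$ and $x_k\perp\!\!\!\perp x_j\mid x_i$, then $x_i$ is an ancestor of $x_j$.
   Context: Model: $X$ is a finite set of observed random variables and $U$ a finite set of unobserved random variables; $V=X\cup U$ and $G=(V,E)$ is a DAG on $V$. Each $v_i\in V$ satisfies $v_i=\sum_{x_j\in \mathrm{pa}(v_i)\cap X} f^{(i)}_j(x_j)+\sum_{u_k\in\mathrm{pa}(v_i)\cap U} f^{(i)}_k(u_k)+n_i$, where the $f$'s are nonlinear functions and the external noises $n_i$ are jointly independent. ''Parent'', ''ancestor'', ''path'', ''d-separation'' refer to $G$ (a path has distinct vertices). Causal Faithfulness Condition (CFC): any conditional independence among variables of $V$ that is not entailed by d-separation in $G$ does not hold. $\perp\!\!\!\perp$ denotes statistical independence, $\not\perp\!\!\!\perp$ dependence. Function class: $\mathcal G$ is a class of generalized additive functions: for $G\in\mathcal G$ and a set $M$ of observed variables, $G(M)=\sum_{x_m\in M} g_m(x_m)$ (with $G(\emptyset)=0$). It satisfies: for any $x_i,x_j\in X$, sets $M,N\subseteq X$, $G_1,G_2\in\mathcal G$ and external noise $n_k$, if $n_k\not\perp\!\!\!\perp x_i-G_1(M)$ and $n_k\not\perp\!\!\!\perp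 x_j-G_2(N)$ then $x_i-G_1(M)\not\perp\!\!\!\perp x_j-G_2(N)$. Definitions, for $X'\subseteq X$ and $x_i,x_j\in X'$: an unobserved causal path (UCP) from $x_i$ to $x_j$ w.r.t. $X'$ is a directed path $x_i\to\cdots\to v_k\to x_j$ in $G$ with $v_k\notin X'$; an unobserved backdoor path (UBP) between $x_i$ and $x_j$ w.r.t. $X'$ is a path $x_i\leftarrow v_k\leftarrow\cdots\leftarrow v\to\cdots\to v_l\to x_j$ with $v_k,v_l\notin X'$ (allowing $v=v_k$, $v=v_l$, or $v=v_k=v_l$; $v$ may be in $X'$). ''UBP/UCP between $x_i$ and $x_j$'' means a UBP or a UCP in either direction. $(x_i,x_j)$ is invisible w.r.t. $X'$ if there is a UBP/UCP between them w.r.t. $X'$. When $X'$ is omitted, $X'=X$. Standing fact (taken as known), for $X'\subseteq X$ and distinct $x_i,x_j\in X'$: (F3) $(x_i,x_j)$ is invisible w.r.t. $X'$ iff for all $M\subseteq X'\setminus\{x_i\}$, $N\subseteq X'\setminus\{x_j\}$, $G_1,G_2\in\mathcal G$: $x_i-G_1(M)\not\perp\!\!\!\perp x_j-G_2(N)$. *)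

From HB Require Import structures.
From mathcomp Require Import all_boot all_order all_algebra.
From mathcomp Require Import all_classical all_reals all_analysis.
Set Implicit Arguments. Unset Strict Implicit. Unset Printing Implicit Defensive.
Import Order.TTheory GRing.Theory Num.Theory.
Local Open Scope classical_set_scope.
Local Open Scope ring_scope.

(* E u v means the edge u -> v.                                       *)
Section Graph.
Context {V : finType} (E : rel V).

Definition acyclic : Prop := forall u v, E u v -> ~~ connect E v u.

Definition ancestor (a b : V) : Prop := connect E a b.

Definition adjacent (u v : V) : bool := E u v || E v u.

Definition dconnected (C : {set V}) (a b : V) : Prop :=
  exists s : seq V,
    [/\ uniq (a :: s), last a s = b, path adjacent a s &
     forall n, (n.+2 < size (a :: s))%N ->
       let u := nth a (a :: s) n in
       let w := nth a (a :: s) n.+1 in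
       let z := nth a (a :: s) n.+2 in
       (E u w && E z w -> exists2 t, connect E w t & t \in C) /\
       (~~ (E u w && E z w) -> w \notin C)].

Definition dsep (A B C : {set V}) : Prop :=
  forall a b, a \in A -> b \in B -> ~ dconnected C a b.

Definition UCP (X' : {set V}) (a b : V) : Prop :=
  exists (t : seq V) (v : V),
    [/\ path E a (rcons (rcons t v) b), uniq (a :: rcons (rcons t v) b)
      & v \notin X'].

(* Unobserved backdoor path between a and b w.r.t. X':
   a <- vk <- ... <- v -> ... -> vl -> b with vk, vl not in X'.
   The left branch is the directed path v :: p (ending at vk = last v p),
   the right branch is the directed path v :: q (ending at vl = last v q);
   v = vk and/or v = vl are allowed (p or q empty); v may lie in X'. *)
Definition UBP (X' : {set V}) (a b : V) : Prop :=
  exists (v : V) (p q : seq V),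
    [/\ [/\ path E v p, E (last v p) a & last v p \notin X'],
         [/\ path E v q, E (last v q) b & last v q \notin X']
      & uniq (a :: rev (v :: p) ++ rcons q b)].

Definition invisible (X' : {set V}) (a b : V) : Prop :=
  UBP X' a b \/ UCP X' a b \/ UCP X' b a.

End Graph.

Section Prob.
Context {d : measure_display} {Omega : measurableType d} {R : realType}
        (P : probability Omega R).

Definition indep (Y Z : Omega -> R) : Prop :=
  forall A B : set R, measurable A -> measurable B ->
    P (Y @^-1` A `&` Z @^-1` B) = (P (Y @^-1` A) * P (Z @^-1` B))%E.

Definition dep (Y Z : Omega -> R) : Prop := ~ indep Y Z.

Definition mutually_indep {I : finType} (Y : I -> Omega -> R) : Prop :=
  forall (S : {set I}) (B : I -> set R), (forall i, measurable (B i)) ->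
    P (\big[setI/setT]_(i in S) (Y i @^-1` B i)) =
    (\prod_(i in S) P (Y i @^-1` B i))%E.

Context {V : finType} (var : V -> Omega -> R).

Definition sigma_of (S : {set V}) : set (set Omega) :=
  <<s [set F | exists v, v \in S /\
                 exists B : set R, measurable B /\ F = var v @^-1` B] >>.

(* conditional independence of the variables in A and those in B given
   those in C:  for every event Ev in sigma(A), P(Ev | sigma(B u C)) has a
   sigma(C)-measurable version h; by a pi-lambda argument it suffices to
   test the defining identity on the generating pi-system F `&` G. *)
Definition cond_indep (A B C : {set V}) : Prop :=
  forall Ev, sigma_of A Ev ->
    exists h : Omega -> R,
      [/\ forall D : set R, measurable D -> sigma_of C (h @^-1` D),
          P.-integrable setT (EFin \o h)
        & forall F G, sigma_of B F -> sigma_of C G ->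
            P (Ev `&` F `&` G) = (\int[P]_(w in F `&` G) (h w)%:E)%E].

Definition GA (g : V -> R -> R) (M : {set V}) : Omega -> R :=
  fun w => \sum_(m in M) g m (var m w).

Definition resid (i : V) (g : V -> R -> R) (M : {set V}) : Omega -> R :=
  fun w => var i w - GA g M w.

End Prob.

Definition nonlinear {R : realType} (h : R -> R) : Prop :=
  ~ exists a b : R, forall x, h x = a * x + b.

From Pilot Require Import Defs.
From HB Require Import structures.
From mathcomp Require Import all_boot all_order all_algebra.
From mathcomp Require Import all_classical all_reals all_analysis.

Set Implicit Arguments.
Unset Strict Implicit.
Unset Printing Implicit Defensive.

(* By (F3) the pair (x_i, x_j) carries an unobserved backdoor or causal path.
   A causal path from x_i to x_j is the claim.  Otherwise there is a trek:
   two directed paths from a common source v, one ending at x_i and meeting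
   x_i nowhere else, the other ending at x_j and avoiding x_i (for a causal
   path from x_j to x_i take v = x_j and a trivial second branch).  Walk down
   a directed path from x_k to its first vertex on the trek, then, if that
   vertex lies on the x_i-branch, back up to v, and finally down to x_j.
   Every collider of this path is an ancestor of x_i and no non-collider is
   x_i, so it d-connects x_k and x_j given x_i; by faithfulness this
   contradicts x_k _||_ x_j | x_i. *)

Lemma path_connect_last (V : finType) (E : rel V) (v : V) (s : seq V) x :
  path E v s -> x \in s -> connect E x (last v s).
Proof.
move=> Hp Hx; case/splitPr: Hx Hp => s1 s2.
rewrite cat_path last_cat /= => /and3P [_ _ Hp].
by apply/connectP; exists s2.
Qed.

Section Treks.
Variables (V : finType) (E : rel V) (i j : V).

(* The d-connection requirement at w for consecutive vertices u, w, z, given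
   {i}: w is a non-collider other than i, or a collider that is an ancestor
   of i (in a DAG, w has an out-edge on the path iff it is not a collider). *)
Definition active_triple (u w z : V) : bool :=
  (w != i) && (E w u || E w z) || [&& E u w, E z w & connect E w i].

Fixpoint active_from (u w : V) (s : seq V) : bool :=
  if s is z :: s' then active_triple u w z && active_from w z s' else true.

Definition active_walk (y : V) (s : seq V) : bool :=
  path (Defs.adjacent E) y s && (if s is w :: s' then active_from y w s' else true).

(* A d-connecting path y :: s from y to j given {i}, within Z, which remains
   d-connecting when any parent of y is put in front of it. *)
Definition route (Z : seq V) (y : V) : Prop :=
  exists s, [/\ uniq (y :: s), last y s = j, active_walk y s,
                forall u, E u y -> active_from u y s & {subset y :: s <= Z}].

Lemma active_from_nth u w s x n :
  active_from u w s -> (n.+2 < size (u :: w :: s))%N ->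
  active_triple (nth x (u :: w :: s) n) (nth x (u :: w :: s) n.+1)
                (nth x (u :: w :: s) n.+2).
Proof.
elim: s u w n => [|z s IH] u w [|n] //= /andP [Huwz Hs] Hn //.
exact: IH.
Qed.

Lemma active_triple_dsep u w z : acyclic E -> active_triple u w z ->
  (E u w && E z w -> exists2 t, connect E w t & t \in [set i]) /\
  (~~ (E u w && E z w) -> w \notin [set i]).
Proof.
move=> acyc /orP [/andP [Hwi Hout]|/and3P [Huw Hzw Hwi]]; last first.
  by rewrite Huw Hzw; split=> // _; exists i; rewrite ?inE.
have noncollider : ~~ (E u w && E z w).
  apply/andP=> -[Huw Hzw].
  by case/orP: Hout => /connect1 Hw; [move: (acyc _ _ Huw) | move: (acyc _ _ Hzw)];
    rewrite Hw.
by rewrite (negPf noncollider) inE.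
Qed.

Lemma active_walk_dconnected k s : acyclic E ->
  uniq (k :: s) -> active_walk k s -> dconnected E [set i] k (last k s).
Proof.
move=> acyc Hu /andP [Hp Hs]; exists s; split=> // n Hn.
apply: active_triple_dsep => //.
by case: s {Hu Hp} Hs Hn => [|w s] //; exact: active_from_nth.
Qed.

Lemma route_nil : route [:: j] j.
Proof. by exists [::]; split. Qed.

Lemma route_sub Z Z' y : {subset Z <= Z'} -> route Z y -> route Z' y.
Proof.
by move=> sZ [s [Hu Hl Hw Hin Hs]]; exists s; split=> // x /Hs /sZ.
Qed.

Lemma active_from_out u w s :
  w != i -> E w u -> active_walk w s -> active_from u w s.
Proof.
by case: s => [|z s] //= Hwi Hwu /andP [_ ->]; rewrite /active_triple Hwi Hwu.
Qed.

Lemma route_cons Z y x : route Z y -> x \notin Z -> Defs.adjacent E x y ->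
  (forall s, active_walk y s -> (forall u, E u y -> active_from u y s) ->
     active_from x y s) ->
  (forall u, E u x -> active_triple u x y) ->
  route (x :: Z) x.
Proof.
move=> [s [Hu Hl Hw Hin Hs]] HxZ Hxy Hxs Hux.
have Hxys := Hxs s Hw Hin; exists (y :: s); split=> //.
- by rewrite cons_uniq Hu andbT; apply: contra HxZ => /Hs.
- by move: Hw; rewrite /active_walk /= Hxy Hxys => /andP [-> _].
- by move=> u /Hux /= ->.
- by move=> w; rewrite inE => /orP [->|/Hs ->]; rewrite ?orbT.
Qed.

Lemma route_forward Z y x :
  route Z y -> E x y -> x \notin Z -> x != i -> route (x :: Z) x.
Proof.
move=> Hr Hxy HxZ Hxi; apply: (route_cons Hr) => //.
- by rewrite /Defs.adjacent Hxy.
- by move=> s _; apply.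
- by move=> u _; rewrite /active_triple Hxi Hxy orbT.
Qed.

Lemma route_backward Z y x : route Z y -> E y x -> x \notin Z -> y != i ->
  connect E x i -> route (x :: Z) x.
Proof.
move=> Hr Hyx HxZ Hyi Hxi; apply: (route_cons Hr) => //.
- by rewrite /Defs.adjacent Hyx orbT.
- by move=> s Hs _; apply: active_from_out.
- by move=> u Hux; rewrite /active_triple Hux Hyx Hxi orbT.
Qed.

Lemma directed_routes v b : path E v b -> last v b = j -> uniq (v :: b) ->
  i \notin v :: b -> {in v :: b, forall y, route (v :: b) y}.
Proof.
elim: b v => [|x b IH] v /=.
  by move=> _ -> _ _ y; rewrite inE => /eqP ->; apply: route_nil.
move=> /andP [Hvx Hp] Hl /andP [Hv Hu]; rewrite inE negb_or => /andP [Hiv Hi].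
have Hr := IH x Hp Hl Hu Hi.
have sub : {subset x :: b <= v :: x :: b} by move=> w Hw; rewrite inE Hw orbT.
move=> y; rewrite inE => /orP [/eqP ->|Hy]; last exact: route_sub sub (Hr y Hy).
by apply: route_forward (Hr x (mem_head _ _)) Hvx Hv _; rewrite eq_sym.
Qed.

Lemma backward_routes Z v a : route Z v -> path E v a -> uniq (a ++ Z) ->
  i \notin belast v a -> (forall x, x \in a -> connect E x i) ->
  {in v :: a, forall y, route (a ++ Z) y}.
Proof.
elim: a v Z => [|x a IH] v Z Hr /=.
  by move=> _ _ _ _ y; rewrite inE => /eqP ->.
move=> /andP [Hvx Hp] /andP [Hx Hu]; rewrite inE negb_or => /andP [Hiv Hi] Hanc.
have HxZ : x \notin Z by apply: contra Hx; rewrite mem_cat orbC => ->.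
have Hvi : v != i by rewrite eq_sym.
have Hrx := route_backward Hr Hvx HxZ Hvi (Hanc x (mem_head _ _)).
have Hu' : uniq (a ++ x :: Z).
  by rewrite -cat1s uniq_catCA /= Hx.
have Hanc' y : y \in a -> connect E y i by move=> Hy; apply: Hanc; rewrite inE Hy orbT.
have IHx := IH x (x :: Z) Hrx Hp Hu' Hi Hanc'.
move=> y; rewrite inE => /orP [/eqP ->|Hy].
  by apply: route_sub Hr => w Hw; rewrite inE mem_cat Hw !orbT.
by apply: route_sub (IHx y Hy) => w; rewrite !(inE, mem_cat) orbCA.
Qed.

Lemma ancestor_route Z x p : {in Z, forall y, route Z y} -> i \in Z ->
  path E x p -> last x p \in Z -> uniq (x :: p) -> route (x :: p ++ Z) x.
Proof.
move=> HZ HiZ; elim: p x => [|y p IH] x /=.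
  by move=> _ HxZ _; apply: route_sub (HZ x HxZ) => w; rewrite inE orbC => ->.
move=> /andP [Hxy Hp] Hl /andP [Hx Hu].
have [HxZ|HxZ] := boolP (x \in Z).
  by apply: route_sub (HZ x HxZ) => w Hw; rewrite !(inE, mem_cat) Hw !orbT.
apply: route_forward (IH y Hp Hl Hu) Hxy _ _.
  by rewrite -cat_cons mem_cat negb_or Hx.
by apply: contra HxZ => /eqP ->.
Qed.

Lemma trek_dconnected v a b k : acyclic E ->
  path E v (rcons a i) -> path E v b -> last v b = j ->
  uniq (rcons a i ++ v :: b) -> connect E k i -> dconnected E [set i] k j.
Proof.
move=> acyc Hpa Hpb Hlb Hu Hki.
have Hai : i \in rcons a i by rewrite mem_rcons mem_head.
move: (Hu); rewrite cat_uniq => /and3P [Hua /hasPn Hdis Hub].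
have Hib : i \notin v :: b by apply: contraL Hai => /Hdis.
have Hia : i \notin belast v (rcons a i).
  rewrite belast_rcons inE negb_or; apply/andP; split.
    by apply/eqP => Hiv; move: (Hdis v (mem_head _ _)); rewrite -Hiv Hai.
  by move: Hua; rewrite rcons_uniq => /andP [].
have Hbr := directed_routes Hpb Hlb Hub Hib.
have Hanc x : x \in rcons a i -> connect E x i.
  by move=> Hx; have := path_connect_last Hpa Hx; rewrite last_rcons.
have Har := backward_routes (Hbr v (mem_head _ _)) Hpa Hu Hia Hanc.
have HZ : {in rcons a i ++ v :: b, forall y, route (rcons a i ++ v :: b) y}.
  move=> y; rewrite mem_cat => /orP [Hy|Hy]; first by apply: Har; rewrite inE Hy orbT.
  by apply: route_sub (Hbr y Hy) => w Hw; rewrite mem_cat Hw orbT.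
have HiZ : i \in rcons a i ++ v :: b by rewrite mem_cat Hai.
have [p [Hp Hl Hup]] : exists p, [/\ path E k p, last k p = i & uniq (k :: p)].
  move/connectP: Hki => [p Hp ->].
  by case: (shortenP Hp) => p' Hp' Hu' _; exists p'.
have HlZ : last k p \in rcons a i ++ v :: b by rewrite Hl.
have [s [Hus Hls Hws _ _]] := ancestor_route HZ HiZ Hp HlZ Hup.
by rewrite -Hls; apply: active_walk_dconnected.
Qed.

Lemma UBP_dconnected X' k : acyclic E ->
  UBP E X' i j -> connect E k i -> dconnected E [set i] k j.
Proof.
move=> acyc [v [p [q [[Hp Hpi _] [Hq Hqj _] Hu]]]].
apply: (@trek_dconnected v p (rcons q j)) => //.
- by rewrite rcons_path Hp.
- by rewrite rcons_path Hq.
- by rewrite last_rcons.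
- move: Hu; rewrite rev_cons cat_rcons -cat_cons -rev_rcons !cat_uniq rev_uniq.
  by rewrite (eq_has (mem_rev _)).
Qed.

Lemma UCP_dconnected X' k : acyclic E ->
  UCP E X' j i -> connect E k i -> dconnected E [set i] k j.
Proof.
move=> acyc [t [v [Hp Hu _]]].
apply: (@trek_dconnected j (rcons t v) [::]) => //.
by rewrite cats1 rcons_uniq -cons_uniq.
Qed.

Lemma invisible_ancestor_or_dconnected X' k : acyclic E ->
  invisible E X' i j -> connect E k i ->
  ancestor E i j \/ dconnected E [set i] k j.
Proof.
move=> acyc [Hb|[[t [v [Hp _ _]]]|Hc]] Hki.
- by right; apply: UBP_dconnected Hb Hki.
- by left; apply/connectP; exists (rcons (rcons t v) j); rewrite ?last_rcons.
- by right; apply: UCP_dconnected Hc Hki.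
Qed.

End Treks.

Import Order.TTheory GRing.Theory Num.Theory.
Local Open Scope classical_set_scope.
Local Open Scope ring_scope.

Theorem corollary1
  (d : measure_display) (Omega : measurableType d) (R : realType)
  (P : probability Omega R)
  (V : finType) (X : {set V})            (* X observed, ~: X = U unobserved *)
  (E : rel V)                            (* the DAG G on V *)
  (var : V -> Omega -> R)                (* the variables v_i *)
  (noise : V -> Omega -> R)              (* the external noises n_i *)
  (f : V -> V -> R -> R)                 (* f i j = f^(i)_j *)
  (Gcl : set (V -> R -> R))              (* the class \mathcal G *)
  (HDAG : acyclic E)
  (Hsem : forall i w, var i w = \sum_(j | E j i) f i j (var j w) + noise i w)
  (Hf_meas : forall i j, E j i -> measurable_fun setT (f i j))
  (Hf_nonlin : forall i j, E j i -> nonlinear (f i j))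
  (Hnoise_meas : forall i, measurable_fun setT (noise i))
  (Hnoise_indep : mutually_indep P noise)
  (* Causal Faithfulness Condition *)
  (HCFC : forall A B C : {set V},
      [disjoint A & B]%B -> [disjoint A & C]%B -> [disjoint B & C]%B ->
      cond_indep P var A B C -> dsep E A B C)
  (HGmeas : forall g, Gcl g -> forall m, measurable_fun setT (g m))
  (HGprop : forall (a b k : V) (M N : {set V}) (g1 g2 : V -> R -> R),
      a \in X -> b \in X -> M \subset X -> N \subset X -> Gcl g1 -> Gcl g2 ->
      dep P (noise k) (resid var a g1 M) -> dep P (noise k) (resid var b g2 N) ->
      dep P (resid var a g1 M) (resid var b g2 N))
  (* standing fact (F3) *)
  (HF3 : forall (X' : {set V}) (a b : V), X' \subset X -> a \in X' -> b \in X' ->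
      a != b ->
      (invisible E X' a b <->
       forall (M N : {set V}) (g1 g2 : V -> R -> R),
         M \subset X' :\ a -> N \subset X' :\ b -> Gcl g1 -> Gcl g2 ->
         dep P (resid var a g1 M) (resid var b g2 N)))
  (i j k : V) (Hi : i \in X) (Hj : j \in X) (Hk : k \in X)
  (Hij : i != j) (Hik : i != k) (Hjk : j != k)
  (Hinv : forall (M N : {set V}) (g1 g2 : V -> R -> R),
      M \subset X :\ i -> N \subset X :\ j -> Gcl g1 -> Gcl g2 ->
      dep P (resid var i g1 M) (resid var j g2 N))
  (Hanc : ancestor E k i)
  (HCI : cond_indep P var [set k] [set j] [set i]) :
  ancestor E i j.
Proof.
have Hinvis : invisible E X i j by apply/(HF3 X i j (subxx X) Hi Hj Hij).
have Hsep : dsep E [set k] [set j] [set i].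
  by apply: HCFC => //; rewrite disjoints1 inE eq_sym.
have [//|Hdcon] := invisible_ancestor_or_dconnected HDAG Hinvis Hanc.
by case: (Hsep k j _ _ Hdcon); rewrite inE.
Qed.
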